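(* Let $\Delta:\mathcal{H}\to\mathcal{H}\otimes\mathcal{H}$ be the unique algebra morphism from $(\mathcal{H},\cdot)$ to $(\mathcal{H}\otimes\mathcal{H},\cdot_\varepsilon)$ such that $\Delta\circ B^+=(\mathrm{Id}\otimes B^+ + B^+\otimes(\nu\circ\varepsilon))\circ\Delta$. Then $(\mathcal{H},\cdot,\Delta,\varepsilon)$ is an infinitesimal bialgebra, and it is graded by the weight, i.e. $\Delta(\mathcal{H}_n)\subseteq\bigoplus_{i+j=n}\mathcal{H}_i\otimes\mathcal{H}_j$ for all $n$.
   Context: Let $K$ be a field. A planar rooted tree is a rooted tree in which the children of every vertex are linearly ordered (left to right). A planar forest is a finite, possibly empty, sequence $t_1\cdots t_n$ of planar rooted trees; the empty forest is denoted $1$, and the weight of a forest is its number of vertices. $\mathcal{H}$ is the free associative unital $K$-algebra generated by the set of planar rooted trees; its monomials are the planar forests, which form a basis, and the product is concatenation. $\mathcal{H}_n$ is the span of forests of weight $n$. $B^+:\mathcal{H}\to\mathcal{H}$ is the linear map sending a forest $F$ to the tree obtained by grafting the roots of the trees of $F$ (in their order) on a new common root ($B^+(1)$ is the one-vertex tree). $\varepsilon:\mathcal{H}\to K$ is the algebra morphism with $\varepsilon(F)=\delta_{F,1}$ for forests $F$, and $\nu:K\to\mathcal{H}$, $\lambda\mapsto\lambda 1$. The product $\cdot_\varepsilon$ on $\mathcal{H}\otimes\mathcal{H}$ is $(a_1\otimes b_1)\cdot_\varepsilon(a_2\otimes b_2)=\varepsilon(a_2)\,a_1\otimes b_1b_2+\varepsilon(b_1)\,a_1a_2\otimes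 b_2-\varepsilon(a_2)\varepsilon(b_1)\,a_1\otimes b_2$; it is associative with unit $1\otimes 1$. Since $(\mathcal{H},B^+)$ is initial among algebras with a linear endomorphism, the algebra morphism $\Delta$ above exists and is unique. An infinitesimal bialgebra is an associative unital algebra $A$ with a coassociative counital coproduct $\Delta$ (counit $\varepsilon$) such that $\Delta(ab)=\Delta(a)(1\otimes b)+(a\otimes 1)\Delta(b)-a\otimes b$ for all $a,b\in A$. *)

From HB Require Import structures.
From mathcomp Require Import all_boot all_algebra.
From mathcomp Require Import finmap.
From mathcomp.multinomials Require Import monalg.

Set Implicit Arguments.
Unset Strict Implicit.
Unset Printing Implicit Defensive.
Import GRing.Theory.
Local Open Scope ring_scope.

Inductive tree : Type := Node of seq tree.

Fixpoint tree_enc (t : tree) : GenTree.tree unit :=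
  let: Node ts := t in GenTree.Node 0 (map tree_enc ts).
Fixpoint tree_dec (g : GenTree.tree unit) : tree :=
  match g with
  | GenTree.Leaf _ => Node [::]
  | GenTree.Node _ gs => Node (map tree_dec gs)
  end.
Fixpoint tree_encK (t : tree) : tree_dec (tree_enc t) = t :=
  match t with Node ts => f_equal Node
   ((fix F (s : seq tree) : map tree_dec (map tree_enc s) = s :=
      match s with
      | [::] => erefl
      | u :: s' => f_equal2 cons (tree_encK u) (F s')
      end) ts) end.
HB.instance Definition _ := Countable.copy tree (can_type tree_encK).

Definition forest := seq tree.
HB.instance Definition _ := Choice.on forest.

Lemma forest_unitm (x y : forest) : x ++ y = [::] -> x = [::] /\ y = [::].
Proof. by case: x => //; case: y. Qed.

HB.instance Definition _ := Choice_isMonomialDef.Build forest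
  (@catA tree) (@cat0s tree) (@cats0 tree) forest_unitm.

Fixpoint tweight (t : tree) : nat :=
  let: Node ts := t in (sumn (map tweight ts)).+1.
Definition fweight (F : forest) : nat := sumn (map tweight F).

(* H = free associative unital K-algebra on planar trees, i.e. the     *)
(* monoid algebra of the free monoid of forests (basis = forests).     *)
Definition H (K : fieldType) := {malg K[forest]}.
(* H (x) H, with basis the pairs of forests (F, G) standing for F (x) G *)
Definition H2 (K : fieldType) := {malg K[(forest * forest)%type]}.
Definition H3 (K : fieldType) := {malg K[(forest * forest * forest)%type]}.

Section Ops.
Variable K : fieldType.

Definition lext (A B : choiceType) (f : A -> {malg K[B]}) (g : {malg K[A]})
  : {malg K[B]} := \sum_(k <- msupp g) g@_k *: f k.

Definition fb (F : forest) : H K := << F >>.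

Definition Bplus (a : H K) : H K := lext (fun F : forest => fb [:: Node F]) a.

Definition eps (a : H K) : K := a@_[::].

Definition nu (c : K) : H K := c *: 1.

Definition tens (a b : H K) : H2 K :=
  \sum_(x <- msupp a) \sum_(y <- msupp b) (a@_x * b@_y) *: << (x, y) >>.

Definition bilext (f : forest * forest -> forest * forest -> H2 K)
  (u v : H2 K) : H2 K :=
  \sum_(k1 <- msupp u) \sum_(k2 <- msupp v) (u@_k1 * v@_k2) *: f k1 k2.

Definition mulE (u v : H2 K) : H2 K :=
  bilext (fun k1 k2 =>
    let: (a1, b1) := k1 in let: (a2, b2) := k2 in
    eps (fb a2) *: tens (fb a1) (fb b1 * fb b2)
    + eps (fb b1) *: tens (fb a1 * fb a2) (fb b2)
    - (eps (fb a2) * eps (fb b1)) *: tens (fb a1) (fb b2)) u v.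

Definition mulT (u v : H2 K) : H2 K :=
  bilext (fun k1 k2 =>
    let: (a1, b1) := k1 in let: (a2, b2) := k2 in
    tens (fb a1 * fb a2) (fb b1 * fb b2)) u v.

Definition IdBplus (u : H2 K) : H2 K :=
  lext (fun k : forest * forest => tens (fb k.1) (Bplus (fb k.2))) u.
Definition BplusNuEps (u : H2 K) : H2 K :=
  lext (fun k : forest * forest => tens (Bplus (fb k.1)) (nu (eps (fb k.2)))) u.

Definition DeltaId (D : H K -> H2 K) (u : H2 K) : H3 K :=
  lext (fun k : forest * forest =>
    lext (fun l : forest * forest => << (l.1, l.2, k.2) >>) (D (fb k.1))) u.
Definition IdDelta (D : H K -> H2 K) (u : H2 K) : H3 K :=
  lext (fun k : forest * forest =>
    lext (fun l : forest * forest => << (k.1, l.1, l.2) >>) (D (fb k.2))) u.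

(* eps (x) Id  and  Id (x) eps, using K (x) H = H = H (x) K *)
Definition EpsId (u : H2 K) : H K :=
  lext (fun k : forest * forest => eps (fb k.1) *: fb k.2) u.
Definition IdEps (u : H2 K) : H K :=
  lext (fun k : forest * forest => eps (fb k.2) *: fb k.1) u.

Definition DeltaSpec (D : {linear H K -> H2 K}) : Prop :=
  [/\ D 1 = tens 1 1,
      forall a b, D (a * b) = mulE (D a) (D b) &
      forall a, D (Bplus a) = IdBplus (D a) + BplusNuEps (D a)].

End Ops.

(* The ε-product on H ⊗ H expands as
     u ·ε v = u (1 ⊗ (ε⊗Id) v) + ((Id⊗ε) u ⊗ 1) v − (Id⊗ε) u ⊗ (ε⊗Id) v,
   so for a counital Δ, multiplicativity for ·ε is the infinitesimal rule
     Δ(t F) = Δ(t) (1 ⊗ F) + (t ⊗ 1) Δ(F) − t ⊗ F.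
   We therefore define Δ on basis forests by Δ(1) = 1 ⊗ 1, this rule, and the
   B⁺-relation on trees, and prove by induction on forests that it is counital;
   the expansion then gives multiplicativity (existence), uniqueness and the
   infinitesimal rule.  Coassociativity and homogeneity follow by induction along
   the same recursion, using counitality to rewrite (B⁺ ⊗ ν∘ε) Δ(F) as B⁺F ⊗ 1. *)

From HB Require Import structures.
From mathcomp Require Import all_boot all_algebra.
From mathcomp Require Import finmap.
From mathcomp.multinomials Require Import monalg.

Set Implicit Arguments.
Unset Strict Implicit.
Unset Printing Implicit Defensive.
Import GRing.Theory.
Local Open Scope ring_scope.

Section LinearExtension.
Variable K : fieldType.
Variables A B : choiceType.
Implicit Types (f g : A -> {malg K[B]}) (u : {malg K[A]}).

Lemma lextEw f u (d : {fset A}) :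
  (msupp u `<=` d)%fset -> lext f u = \sum_(k <- d) u@_k *: f k.
Proof.
move=> le; rewrite /lext (big_fset_incl _ le) //= => x _ /mcoeff_outdom ->.
by rewrite scale0r.
Qed.

Lemma lext_is_linear f : linear (lext f).
Proof.
move=> c u v; pose d := (msupp u `|` msupp v `|` msupp (c *: u + v))%fset.
have du : (msupp u `<=` d)%fset by rewrite /d -fsetUA fsubsetUl.
have dv : (msupp v `<=` d)%fset by rewrite /d -fsetUA fsubsetU // fsubsetUl orbT.
have duv : (msupp (c *: u + v) `<=` d)%fset by rewrite /d fsubsetUr.
rewrite (lextEw _ du) (lextEw _ dv) (lextEw _ duv) scaler_sumr -big_split /=.
by apply: eq_bigr => k _; rewrite mcoeffD mcoeffZ scalerDl scalerA.
Qed.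

HB.instance Definition _ f :=
  GRing.isLinear.Build K {malg K[A]} {malg K[B]} *:%R (lext f) (lext_is_linear f).

Lemma malgUZ (c : K) (k : A) : << c *g k >> = c *: (<< k >> : {malg K[A]}).
Proof. by apply/malgP => k'; rewrite mcoeffZ !mcoeffU mulr_natr. Qed.

Lemma lextU f (c : K) (k : A) : lext f << c *g k >> = c *: f k.
Proof. by rewrite (lextEw _ msuppU_le) big_seq_fset1 mcoeffUU. Qed.

Lemma lextU1 f (k : A) : lext f << k >> = f k.
Proof. by rewrite lextU scale1r. Qed.

Lemma lextZU f (c : K) (k : A) : lext f (c *: << k >>) = c *: f k.
Proof. by rewrite -malgUZ lextU. Qed.

Lemma lext_basis u : lext (fun k => << k >>) u = u.
Proof. by rewrite [RHS]monalgE /lext; apply: eq_bigr => k _; rewrite malgUZ. Qed.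

Lemma eq_lext f g : f =1 g -> lext f =1 lext g.
Proof. by move=> eq_fg u; rewrite /lext; apply: eq_bigr => k _; rewrite eq_fg. Qed.

Lemma lext_add f g u : lext (fun k => f k + g k) u = lext f u + lext g u.
Proof. by rewrite /lext -big_split; apply: eq_bigr => k _; rewrite scalerDr. Qed.

Lemma lext_sub f g u : lext (fun k => f k - g k) u = lext f u - lext g u.
Proof. by rewrite /lext -sumrB; apply: eq_bigr => k _; rewrite scalerBr. Qed.

Lemma lext_zero u : lext (fun _ => 0 : {malg K[B]}) u = 0.
Proof. by rewrite /lext big1 // => k _; rewrite scaler0. Qed.

Lemma scaler_lext f (c : K) u : c *: lext f u = lext (fun k => c *: f k) u.
Proof.
by rewrite /lext scaler_sumr; apply: eq_bigr => k _; rewrite !scalerA mulrC.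
Qed.

Lemma oppr_lext f u : - lext f u = lext (fun k => - f k) u.
Proof. by rewrite -scaleN1r scaler_lext; apply: eq_lext => k; rewrite scaleN1r. Qed.

Lemma msupp_lext f u k :
  k \in msupp (lext f u) -> exists2 x, x \in msupp u & k \in msupp (f x).
Proof.
rewrite -mcoeff_neq0 /lext raddf_sum /=.
have [/hasP [x ux kfx] _ | /hasPn nk] := boolP (has (fun x => k \in msupp (f x)) (msupp u)).
  by exists x.
rewrite big1_seq ?eqxx // => x /andP [_ /nk].
by rewrite mcoeffZ -mcoeff_eq0 => /eqP ->; rewrite mulr0.
Qed.

End LinearExtension.

Lemma linear_lext (K : fieldType) (A B C : choiceType)
    (phi : {linear {malg K[B]} -> {malg K[C]}}) (f : A -> {malg K[B]}) u :
  phi (lext f u) = lext (fun k => phi (f k)) u.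
Proof. by rewrite [lext f u]/lext linear_sum; apply: eq_bigr => k _; rewrite linearZ. Qed.

Lemma linear_lextE (K : fieldType) (A B : choiceType)
    (phi : {linear {malg K[A]} -> {malg K[B]}}) u :
  phi u = lext (fun k => phi << k >>) u.
Proof. by rewrite -{1}(lext_basis u) linear_lext. Qed.

Lemma lext_comp (K : fieldType) (A B C : choiceType) (f : B -> {malg K[C]})
    (g : A -> {malg K[B]}) u :
  lext f (lext g u) = lext (fun k => lext f (g k)) u.
Proof. exact: linear_lext. Qed.

Lemma lext_swap (K : fieldType) (A B C : choiceType) (f : A -> B -> {malg K[C]})
    (u : {malg K[A]}) (v : {malg K[B]}) :
  lext (fun k => lext (f k) v) u = lext (fun l => lext (f^~ l) u) v.
Proof.
rewrite /lext; under eq_bigr => k _ do rewrite scaler_sumr.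
rewrite exchange_big /=; apply: eq_bigr => l _; rewrite scaler_sumr.
by apply: eq_bigr => k _; rewrite !scalerA mulrC.
Qed.

Lemma addrB_congr (M : zmodType) (a b c a' b' c' : M) :
  a = a' -> b = b' -> c = c' -> a + b - c = a' + b' - c'.
Proof. by move=> -> -> ->. Qed.

Lemma addrBDA (M : zmodType) (a b c d e : M) :
  a + (b + c - d) - e = a + b - e + c - d.
Proof. by rewrite !addrA [a + b - e + c]addrAC [LHS]addrAC. Qed.

Definition forest_nested_ind (P : forest -> Prop) (P_nil : P [::])
    (P_node : forall G, P G -> P [:: Node G])
    (P_cons : forall t F, P [:: t] -> P F -> P (t :: F)) : forall F, P F :=
  fix IHF (F : forest) : P F :=
    match F with
    | [::] => P_nil
    | t :: F' => P_cons t F'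
        ((fix IHt (t : tree) : P [:: t] :=
           let: Node G := t in P_node G
             ((fix IHG (G : forest) : P G :=
                 match G with
                 | [::] => P_nil
                 | u :: G' => P_cons u G' (IHt u) (IHG G')
                 end) G)) t)
        (IHF F')
    end.

Section Coproduct.
Variable K : fieldType.
Local Notation H := (H K).
Local Notation H2 := (H2 K).
Local Notation H3 := (H3 K).
Local Notation F2 := (forest * forest)%type.
Local Notation F3 := (forest * forest * forest)%type.
Local Notation fb := (fb K).

Lemma fb_nil : fb [::] = 1.
Proof. by []. Qed.

Lemma mulHE (a b : H) :
  a * b = lext (fun x => lext (fun y => << (x ++ y : forest) >>) b) a.
Proof.
rewrite malgME /lext; apply: eq_bigr => x _; rewrite scaler_sumr.
by apply: eq_bigr => y _; rewrite malgUZ scalerA.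
Qed.

Lemma fbM (x y : forest) : fb x * fb y = fb (x ++ y).
Proof. by rewrite mulHE /fb !lextU1. Qed.

Lemma BplusU (F : forest) : Bplus (fb F) = fb [:: Node F].
Proof. by rewrite /Bplus lextU1. Qed.

Lemma tensE (a b : H) :
  tens a b = lext (fun x => lext (fun y => << ((x, y) : F2) >>) b) a.
Proof.
rewrite /tens /lext; apply: eq_bigr => x _; rewrite scaler_sumr.
by apply: eq_bigr => y _; rewrite scalerA.
Qed.

Lemma tensU (x y : forest) : tens (fb x) (fb y) = << ((x, y) : F2) >>.
Proof. by rewrite tensE /fb !lextU1. Qed.

Lemma bilextE f (u v : H2) : bilext f u v = lext (fun k1 => lext (f k1) v) u.
Proof.
rewrite /bilext /lext; apply: eq_bigr => x _; rewrite scaler_sumr.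
by apply: eq_bigr => y _; rewrite scalerA.
Qed.

Lemma epsU (x : forest) : eps (fb x) = (x == [::])%:R.
Proof. by rewrite /eps /fb mcoeffU eq_sym. Qed.

Definition mulE_basis (k1 k2 : F2) : H2 :=
  let: (a1, b1) := k1 in let: (a2, b2) := k2 in
  (a2 == [::])%:R *: << ((a1, b1 ++ b2) : F2) >>
  + (b1 == [::])%:R *: << ((a1 ++ a2, b2) : F2) >>
  - ((a2 == [::])%:R * (b1 == [::])%:R) *: << ((a1, b2) : F2) >>.

Lemma mulEE (u v : H2) : mulE u v = lext (fun k1 => lext (mulE_basis k1) v) u.
Proof.
rewrite /mulE bilextE; apply: eq_lext => -[a1 b1]; apply: eq_lext => -[a2 b2].
by rewrite /mulE_basis !fbM !tensU !epsU.
Qed.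

Lemma mulE_lext (f g : forest -> H2) (a b : H) :
  mulE (lext f a) (lext g b) = lext (fun x => lext (fun y => mulE (f x) (g y)) b) a.
Proof.
rewrite mulEE lext_comp; apply: eq_lext => x.
under eq_lext => k1 do rewrite lext_comp.
by rewrite lext_swap; apply: eq_lext => y; rewrite mulEE.
Qed.

Definition rcat2 (G : forest) (u : H2) : H2 :=
  lext (fun k : F2 => << ((k.1, k.2 ++ G) : F2) >>) u.
Definition lcat2 (F : forest) (u : H2) : H2 :=
  lext (fun k : F2 => << ((F ++ k.1, k.2) : F2) >>) u.

HB.instance Definition _ G := GRing.Linear.copy (rcat2 G) (lext _).
HB.instance Definition _ F := GRing.Linear.copy (lcat2 F) (lext _).
HB.instance Definition _ := GRing.Linear.copy (@EpsId K) (lext _).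
HB.instance Definition _ := GRing.Linear.copy (@IdEps K) (lext _).
HB.instance Definition _ := GRing.Linear.copy (@IdBplus K) (lext _).
HB.instance Definition _ := GRing.Linear.copy (@BplusNuEps K) (lext _).

Lemma rcat2U (k : F2) G : rcat2 G << k >> = << ((k.1, k.2 ++ G) : F2) >>.
Proof. exact: lextU1. Qed.

Lemma lcat2U (k : F2) F : lcat2 F << k >> = << ((F ++ k.1, k.2) : F2) >>.
Proof. exact: lextU1. Qed.

Lemma rcat2_nil (u : H2) : rcat2 [::] u = u.
Proof. by rewrite -[RHS]lext_basis; apply: eq_lext => -[x y] /=; rewrite cats0. Qed.

Lemma lcat2_nil (u : H2) : lcat2 [::] u = u.
Proof. by rewrite -[RHS]lext_basis; apply: eq_lext => -[x y]. Qed.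

Lemma rcat2_cat (u : H2) F G : rcat2 G (rcat2 F u) = rcat2 (F ++ G) u.
Proof. by rewrite /rcat2 lext_comp; apply: eq_lext => -[x y]; rewrite lextU1 /= catA. Qed.

Lemma lcat2_cat (u : H2) F G : lcat2 F (lcat2 G u) = lcat2 (F ++ G) u.
Proof. by rewrite /lcat2 lext_comp; apply: eq_lext => -[x y]; rewrite lextU1 /= catA. Qed.

Lemma rcat2_lcat2 (u : H2) F G : rcat2 G (lcat2 F u) = lcat2 F (rcat2 G u).
Proof. by rewrite /rcat2 /lcat2 !lext_comp; apply: eq_lext => -[x y]; rewrite !lextU1. Qed.

Lemma mulT_rcat2 (u : H2) G : mulT u (tens 1 (fb G)) = rcat2 G u.
Proof.
rewrite /mulT bilextE -fb_nil tensU; apply: eq_lext => -[a b].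
by rewrite lextU1 !fbM cats0 tensU.
Qed.

Lemma mulT_lcat2 (v : H2) F : mulT (tens (fb F) 1) v = lcat2 F v.
Proof.
rewrite /mulT bilextE -fb_nil tensU lextU1; apply: eq_lext => -[a b].
by rewrite !fbM tensU.
Qed.

Lemma EpsIdE (u : H2) : EpsId u = lext (fun k : F2 => (k.1 == [::])%:R *: << k.2 >>) u.
Proof. by apply: eq_lext => k; rewrite epsU. Qed.

Lemma IdEpsE (u : H2) : IdEps u = lext (fun k : F2 => (k.2 == [::])%:R *: << k.1 >>) u.
Proof. by apply: eq_lext => k; rewrite epsU. Qed.

Lemma mulE_expand (u v : H2) :
  mulE u v = mulT u (tens 1 (EpsId v)) + mulT (tens (IdEps u) 1) v
             - tens (IdEps u) (EpsId v).
Proof.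
rewrite mulEE /mulT !bilextE !tensE -fb_nil lextU1 EpsIdE IdEpsE.
rewrite !lext_comp -lext_add -lext_sub; apply: eq_lext => -[x1 y1] /=.
rewrite !linearZ /= !lextU1 !lext_comp oppr_lext !scaler_lext -!lext_add.
apply: eq_lext => -[a2 b2] /=.
rewrite -!malgUZ !lextU !linearZ /= !lextU1 !fbM !tensU cats0 /=.
by rewrite !scalerN !scalerA -!malgUZ.
Qed.

Lemma IdBplusE (u : H2) :
  IdBplus u = lext (fun k : F2 => << ((k.1, [:: Node k.2]) : F2) >>) u.
Proof. by apply: eq_lext => -[x y]; rewrite /= BplusU tensU. Qed.

Lemma BplusNuEpsE (u : H2) : BplusNuEps u =
  lext (fun k : F2 => (k.2 == [::])%:R *: << (([:: Node k.1], [::]) : F2) >>) u.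
Proof.
apply: eq_lext => -[x y] /=.
by rewrite epsU /nu BplusU tensE lextU1 -fb_nil -malgUZ lextU -malgUZ.
Qed.

Lemma BplusNuEps_IdEps (u : H2) :
  BplusNuEps u = lext (fun x => << (([:: Node x], [::]) : F2) >>) (IdEps u).
Proof. by rewrite BplusNuEpsE IdEpsE lext_comp; apply: eq_lext => -[x y]; rewrite lextZU. Qed.

Fixpoint coprod_tree (t : tree) : H2 :=
  let: Node G := t in
  let coprodG := (fix coprodF (F : forest) : H2 :=
    match F with
    | [::] => << (([::], [::]) : F2) >>
    | u :: F' =>
        rcat2 F' (coprod_tree u) + lcat2 [:: u] (coprodF F') - << (([:: u], F') : F2) >>
    end) G in
  IdBplus coprodG + BplusNuEps coprodG.

Fixpoint coprod_rec (F : forest) : H2 :=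
  match F with
  | [::] => << (([::], [::]) : F2) >>
  | t :: F' =>
      rcat2 F' (coprod_tree t) + lcat2 [:: t] (coprod_rec F') - << (([:: t], F') : F2) >>
  end.

Fact coprod_key : unit. Proof. by []. Qed.
Definition coprod := locked_with coprod_key coprod_rec.
Canonical coprod_unlockable := [unlockable fun coprod].

Lemma coprod_nil : coprod [::] = << (([::], [::]) : F2) >>.
Proof. by rewrite unlock. Qed.

Lemma coprod1 t : coprod [:: t] = coprod_tree t.
Proof. by rewrite unlock /= rcat2_nil lcat2U cats0 addrK. Qed.

Lemma coprod_node G : coprod [:: Node G] = IdBplus (coprod G) + BplusNuEps (coprod G).
Proof. by rewrite coprod1 unlock. Qed.

Lemma coprod_cons t F : coprod (t :: F) =
  rcat2 F (coprod [:: t]) + lcat2 [:: t] (coprod F) - << (([:: t], F) : F2) >>.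
Proof. by rewrite coprod1 unlock. Qed.

Lemma EpsIdU (x y : forest) : EpsId << ((x, y) : F2) >> = (x == [::])%:R *: fb y.
Proof. by rewrite EpsIdE lextU1. Qed.

Lemma IdEpsU (x y : forest) : IdEps << ((x, y) : F2) >> = (y == [::])%:R *: fb x.
Proof. by rewrite IdEpsE lextU1. Qed.

Lemma EpsId_rcat2 (u : H2) G : EpsId (rcat2 G u) = EpsId u * fb G.
Proof.
rewrite !EpsIdE lext_comp mulHE lext_comp; apply: eq_lext => -[x y] /=.
by rewrite lextU1 lextZU lextU1.
Qed.

Lemma EpsId_lcat2 t (v : H2) : EpsId (lcat2 [:: t] v) = 0.
Proof.
rewrite EpsIdE lext_comp -(lext_zero _ v); apply: eq_lext => -[x y].
by rewrite lextU1 /= scale0r.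
Qed.

Lemma EpsId_IdBplus (u : H2) : EpsId (IdBplus u) = Bplus (EpsId u).
Proof.
rewrite EpsIdE IdBplusE lext_comp /Bplus EpsIdE lext_comp.
by apply: eq_lext => -[x y]; rewrite lextU1 /= lextZU.
Qed.

Lemma EpsId_BplusNuEps (u : H2) : EpsId (BplusNuEps u) = 0.
Proof.
rewrite EpsIdE BplusNuEpsE lext_comp -(lext_zero _ u); apply: eq_lext => -[x y].
by rewrite lextZU /= scale0r scaler0.
Qed.

Lemma IdEps_rcat2 (u : H2) G : IdEps (rcat2 G u) = (G == [::])%:R *: IdEps u.
Proof.
rewrite !IdEpsE lext_comp scaler_lext; apply: eq_lext => -[x y] /=.
rewrite lextU1 /= scalerA; congr (_ *: _).
by case: y => [|? ?]; case: G => [|? ?]; rewrite /= ?mulr1 ?mulr0 ?mul0r.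
Qed.

Lemma IdEps_lcat2 t (v : H2) : IdEps (lcat2 [:: t] v) = fb [:: t] * IdEps v.
Proof.
rewrite !IdEpsE lext_comp mulHE lextU1 lext_comp; apply: eq_lext => -[x y] /=.
by rewrite lextU1 lextZU.
Qed.

Lemma IdEps_IdBplus (u : H2) : IdEps (IdBplus u) = 0.
Proof.
rewrite IdEpsE IdBplusE lext_comp -(lext_zero _ u); apply: eq_lext => -[x y].
by rewrite lextU1 /= scale0r.
Qed.

Lemma IdEps_BplusNuEps (u : H2) : IdEps (BplusNuEps u) = Bplus (IdEps u).
Proof.
rewrite IdEpsE BplusNuEpsE lext_comp /Bplus IdEpsE lext_comp.
by apply: eq_lext => -[x y]; rewrite !lextZU /= scale1r.
Qed.

Lemma EpsId_coprod F : EpsId (coprod F) = fb F.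
Proof.
elim/forest_nested_ind: F => [|G IH|t F IHt IHF].
- by rewrite coprod_nil EpsIdU eqxx scale1r.
- rewrite coprod_node linearD /= -[RHS]addr0; congr (_ + _); last exact: EpsId_BplusNuEps.
  by rewrite EpsId_IdBplus IH BplusU.
rewrite coprod_cons linearB linearD /= EpsId_rcat2 IHt EpsId_lcat2 EpsIdU /=.
by rewrite scale0r subr0 addr0 fbM.
Qed.

Lemma IdEps_coprod F : IdEps (coprod F) = fb F.
Proof.
elim/forest_nested_ind: F => [|G IH|t F IHt IHF].
- by rewrite coprod_nil IdEpsU eqxx scale1r.
- rewrite coprod_node linearD /= -[RHS]add0r; congr (_ + _); first exact: IdEps_IdBplus.
  by rewrite IdEps_BplusNuEps IH BplusU.
rewrite coprod_cons linearB linearD /= IdEps_rcat2 IHt IdEps_lcat2 IHF IdEpsU.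
by rewrite addrAC subrr add0r fbM.
Qed.

Lemma coprod_node_counit G :
  coprod [:: Node G] = IdBplus (coprod G) + << (([:: Node G], [::]) : F2) >>.
Proof. by rewrite coprod_node BplusNuEps_IdEps IdEps_coprod lextU1. Qed.

Lemma coprod_cat F G :
  coprod (F ++ G) = rcat2 G (coprod F) + lcat2 F (coprod G) - << ((F, G) : F2) >>.
Proof.
elim: F => [|t F IH].
  by rewrite coprod_nil rcat2U lcat2_nil /= addrAC subrr add0r.
rewrite cat_cons (coprod_cons t (F ++ G)) (coprod_cons t F) IH !linearB !linearD /=.
by rewrite rcat2_cat rcat2_lcat2 rcat2U lcat2_cat lcat2U /=; apply: addrBDA.
Qed.

Lemma coprodM F G : mulE (coprod F) (coprod G) = coprod (F ++ G).
Proof.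
by rewrite mulE_expand EpsId_coprod IdEps_coprod mulT_rcat2 mulT_lcat2 tensU coprod_cat.
Qed.

Lemma EpsId_Delta (a : H) : EpsId (lext coprod a) = a.
Proof.
rewrite -[RHS]lext_basis linear_lext; apply: eq_lext => x.
exact: EpsId_coprod.
Qed.

Lemma IdEps_Delta (a : H) : IdEps (lext coprod a) = a.
Proof.
rewrite -[RHS]lext_basis linear_lext; apply: eq_lext => x.
exact: IdEps_coprod.
Qed.

Lemma Delta_spec : DeltaSpec (lext coprod : {linear H -> H2}).
Proof.
split=> [|a b|a] /=.
- by rewrite -fb_nil lextU1 coprod_nil tensU.
- rewrite mulHE lext_comp mulE_lext; apply: eq_lext => x.
  by rewrite lext_comp; apply: eq_lext => y; rewrite lextU1 coprodM.
- rewrite /Bplus !linear_lext -lext_add.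
  by apply: eq_lext => x /=; rewrite /fb lextU1 coprod_node.
Qed.

Lemma DeltaSpec_unique (D : {linear H -> H2}) : DeltaSpec D -> D =1 lext coprod.
Proof.
case=> D1 DM DB; have D_fb F : D (fb F) = coprod F.
  elim/forest_nested_ind: F => [|G IH|t F IHt IHF].
  - by rewrite fb_nil D1 coprod_nil -fb_nil tensU.
  - by rewrite -BplusU DB IH coprod_node.
  - by rewrite -(fbM [:: t] F) DM IHt IHF coprodM.
by move=> a; rewrite linear_lextE; apply: eq_lext => x; apply: D_fb.
Qed.

Lemma DeltaSpec_counit (D : {linear H -> H2}) a :
  DeltaSpec D -> EpsId (D a) = a /\ IdEps (D a) = a.
Proof. by move=> /DeltaSpec_unique ->; rewrite EpsId_Delta IdEps_Delta. Qed.

Lemma DeltaSpec_infinitesimal (D : {linear H -> H2}) a b : DeltaSpec D ->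
  D (a * b) = mulT (D a) (tens 1 b) + mulT (tens a 1) (D b) - tens a b.
Proof.
move=> D_spec; have [_ DM _] := D_spec.
by rewrite DM mulE_expand !(DeltaSpec_unique D_spec) EpsId_Delta IdEps_Delta.
Qed.

Definition coprodId (u : H2) : H3 :=
  lext (fun k : F2 => lext (fun l : F2 => << ((l.1, l.2, k.2) : F3) >>) (coprod k.1)) u.
Definition Idcoprod (u : H2) : H3 :=
  lext (fun k : F2 => lext (fun l : F2 => << ((k.1, l.1, l.2) : F3) >>) (coprod k.2)) u.
Definition rcat3 (G : forest) (w : H3) : H3 :=
  lext (fun m : F3 => << ((m.1.1, m.1.2, m.2 ++ G) : F3) >>) w.
Definition lcat3 (F : forest) (w : H3) : H3 :=
  lext (fun m : F3 => << ((F ++ m.1.1, m.1.2, m.2) : F3) >>) w.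
Definition tensl3 (F : forest) (v : H2) : H3 :=
  lext (fun k : F2 => << ((F, k.1, k.2) : F3) >>) v.
Definition tensr3 (G : forest) (w : H2) : H3 :=
  lext (fun k : F2 => << ((k.1, k.2, G) : F3) >>) w.
(* [mid3 w v] is the product [(w (x) 1) (1 (x) v)] in [H (x) H (x) H]. *)
Definition mid3 (w v : H2) : H3 :=
  lext (fun l : F2 => lext (fun k : F2 => << ((l.1, l.2 ++ k.1, k.2) : F3) >>) v) w.
Definition IdIdBplus (w : H3) : H3 :=
  lext (fun m : F3 => << ((m.1.1, m.1.2, [:: Node m.2]) : F3) >>) w.

HB.instance Definition _ := GRing.Linear.copy coprodId (lext _).
HB.instance Definition _ := GRing.Linear.copy Idcoprod (lext _).
HB.instance Definition _ G := GRing.Linear.copy (tensr3 G) (lext _).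

Lemma DeltaIdE (D : {linear H -> H2}) u : D =1 lext coprod -> DeltaId D u = coprodId u.
Proof. by move=> DE; apply: eq_lext => k; rewrite DE /fb lextU1. Qed.

Lemma IdDeltaE (D : {linear H -> H2}) u : D =1 lext coprod -> IdDelta D u = Idcoprod u.
Proof. by move=> DE; apply: eq_lext => k; rewrite DE /fb lextU1. Qed.

Lemma coprodIdU x F : coprodId << ((x, F) : F2) >> = tensr3 F (coprod x).
Proof. exact: lextU1. Qed.

Lemma IdcoprodU x F : Idcoprod << ((x, F) : F2) >> = tensl3 x (coprod F).
Proof. exact: lextU1. Qed.

Lemma coprodId_rcat2 (u : H2) G : coprodId (rcat2 G u) = rcat3 G (coprodId u).
Proof.
rewrite /coprodId /rcat2 /rcat3 !lext_comp; apply: eq_lext => -[x y].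
by rewrite lextU1 lext_comp /=; apply: eq_lext => -[p q]; rewrite lextU1.
Qed.

Lemma Idcoprod_lcat2 F (v : H2) : Idcoprod (lcat2 F v) = lcat3 F (Idcoprod v).
Proof.
rewrite /Idcoprod /lcat2 /lcat3 !lext_comp; apply: eq_lext => -[x y].
by rewrite lextU1 /= lext_comp; apply: eq_lext => -[p q]; rewrite lextU1.
Qed.

Lemma coprodId_lcat2 t (v : H2) : coprodId (lcat2 [:: t] v) =
  mid3 (coprod [:: t]) v + lcat3 [:: t] (coprodId v) - tensl3 [:: t] v.
Proof.
rewrite /mid3 lext_swap /lcat3 /coprodId /tensl3 /lcat2 [LHS]lext_comp.
rewrite [X in _ + X - _]lext_comp -lext_add -lext_sub; apply: eq_lext => -[x y] /=.
rewrite [LHS]lextU1 /= coprod_cons [LHS]linearB [in X in X = _]linearD /=.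
apply: addrB_congr.
- by rewrite /rcat2 [LHS]lext_comp; apply: eq_lext => -[p q]; rewrite lextU1.
- by rewrite /lcat2 !lext_comp; apply: eq_lext => -[p q]; rewrite !lextU1.
- by rewrite lextU1.
Qed.

Lemma Idcoprod_rcat2 (u : H2) G :
  Idcoprod (rcat2 G u) = rcat3 G (Idcoprod u) + mid3 u (coprod G) - tensr3 G u.
Proof.
rewrite /Idcoprod /rcat2 /rcat3 /mid3 /tensr3 [LHS]lext_comp.
rewrite [X in _ = X + _ - _]lext_comp -lext_add -lext_sub; apply: eq_lext => -[x y] /=.
rewrite [LHS]lextU1 /= coprod_cat [LHS]linearB [in X in X = _]linearD /=.
apply: addrB_congr.
- by rewrite /rcat2 !lext_comp; apply: eq_lext => -[p q]; rewrite !lextU1.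
- by rewrite /lcat2 [LHS]lext_comp; apply: eq_lext => -[p q]; rewrite !lextU1.
- by rewrite lextU1.
Qed.

Lemma coprodId_IdBplus (u : H2) : coprodId (IdBplus u) = IdIdBplus (coprodId u).
Proof.
rewrite IdBplusE /coprodId /IdIdBplus !lext_comp; apply: eq_lext => -[x y].
by rewrite lextU1 /= lext_comp; apply: eq_lext => -[p q]; rewrite lextU1.
Qed.

Lemma Idcoprod_IdBplus (u : H2) :
  Idcoprod (IdBplus u) = IdIdBplus (Idcoprod u) + tensr3 [::] (IdBplus u).
Proof.
rewrite IdBplusE /Idcoprod /IdIdBplus /tensr3 [LHS]lext_comp.
rewrite [X in _ = X + _]lext_comp [X in _ = _ + X]lext_comp -lext_add.
apply: eq_lext => -[x y]; rewrite [LHS]lextU1 /= coprod_node_counit [LHS]linearD /=.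
apply: (f_equal2 +%R); last by rewrite !lextU1.
by rewrite IdBplusE !lext_comp; apply: eq_lext => -[p q]; rewrite !lextU1.
Qed.

Lemma coprod_coassoc F : coprodId (coprod F) = Idcoprod (coprod F).
Proof.
elim/forest_nested_ind: F => [|G IH|t F IHt IHF].
- by rewrite coprod_nil coprodIdU IdcoprodU coprod_nil /tensl3 /tensr3 !lextU1.
- rewrite coprod_node_counit [coprodId _]linearD [Idcoprod _]linearD /=.
  rewrite coprodId_IdBplus Idcoprod_IdBplus IH coprodIdU IdcoprodU.
  rewrite coprod_node_counit coprod_nil [tensr3 _ (_ + _)]linearD /= addrA.
  by rewrite [tensr3 _ << _ >>]lextU1 [tensl3 _ _]lextU1.
rewrite coprod_cons [coprodId _]linearB [Idcoprod _]linearB /=.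
rewrite [coprodId (_ + _)]linearD [Idcoprod (_ + _)]linearD /=.
rewrite coprodId_rcat2 coprodId_lcat2 coprodIdU.
rewrite Idcoprod_rcat2 Idcoprod_lcat2 IdcoprodU IHt IHF.
exact: addrBDA.
Qed.

Lemma DeltaSpec_coassoc (D : {linear H -> H2}) a :
  DeltaSpec D -> DeltaId D (D a) = IdDelta D (D a).
Proof.
move=> /DeltaSpec_unique DE; rewrite (DeltaIdE _ DE) (IdDeltaE _ DE) (DE a).
by rewrite [LHS]linear_lext [RHS]linear_lext; apply: eq_lext => x; apply: coprod_coassoc.
Qed.

Definition weight2 (k : F2) : nat := (fweight k.1 + fweight k.2)%N.
Definition homog (n : nat) (u : H2) : Prop :=
  forall k, k \in msupp u -> weight2 k = n.

Lemma homog_lext (A : choiceType) n (f : A -> H2) (u : {malg K[A]}) :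
  (forall x, x \in msupp u -> homog n (f x)) -> homog n (lext f u).
Proof. by move=> fn k /msupp_lext [x ux kfx]; apply: fn kfx. Qed.

Lemma homogD n (u v : H2) : homog n u -> homog n v -> homog n (u + v).
Proof.
by move=> un vn k /(fsubsetP (msuppD_le u v)); rewrite in_fsetU => /orP [/un | /vn].
Qed.

Lemma homogB n (u v : H2) : homog n u -> homog n v -> homog n (u - v).
Proof.
by move=> un vn k /(fsubsetP (msuppB_le u v)); rewrite in_fsetU => /orP [/un | /vn].
Qed.

Lemma homogU n (k : F2) : weight2 k = n -> homog n << k >>.
Proof. by move=> kn k' /(fsubsetP msuppU_le); rewrite in_fset1 => /eqP ->. Qed.

Lemma fweight_cat F G : fweight (F ++ G) = (fweight F + fweight G)%N.
Proof. by rewrite /fweight map_cat sumn_cat. Qed.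

Lemma fweight_node G : fweight [:: Node G] = (fweight G).+1.
Proof. by rewrite /fweight /= addn0. Qed.

Lemma coprod_homog F : homog (fweight F) (coprod F).
Proof.
elim/forest_nested_ind: F => [|G IH|t F IHt IHF].
- by rewrite coprod_nil; apply: homogU.
- rewrite coprod_node_counit; apply: homogD; last by apply: homogU; rewrite /weight2 addn0.
  rewrite IdBplusE; apply: homog_lext => -[x y] /IH xy; apply: homogU.
  by move: xy; rewrite /weight2 /= !fweight_node addnS => ->.
rewrite coprod_cons; apply: homogB; first apply: homogD.
- apply: homog_lext => -[x y] /IHt xy; apply: homogU.
  by move: xy; rewrite /weight2 /= fweight_cat addnA => ->; rewrite -fweight_cat.
- apply: homog_lext => -[x y] /IHF xy; apply: homogU.
  by move: xy; rewrite /weight2 /= -addnA => ->.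
- by apply: homogU; exact: esym (fweight_cat [:: t] F).
Qed.

Lemma DeltaSpec_homog (D : {linear H -> H2}) n a : DeltaSpec D ->
  (forall F, F \in msupp a -> fweight F = n) -> homog n (D a).
Proof.
move=> /DeltaSpec_unique -> an.
by apply: homog_lext => x /an <-; apply: coprod_homog.
Qed.

End Coproduct.

Theorem theorem9 (K : fieldType) :
  (exists D : {linear H K -> H2 K}, DeltaSpec D) /\
  (forall D : {linear H K -> H2 K}, DeltaSpec D ->
    (forall a : H K, DeltaId D (D a) = IdDelta D (D a)) /\
    (forall a : H K, EpsId (D a) = a /\ IdEps (D a) = a) /\
    (forall a b : H K,
       D (a * b) = mulT (D a) (tens 1 b) + mulT (tens a 1) (D b) - tens a b) /\
    (forall (n : nat) (a : H K),
       (forall F, F \in msupp a -> fweight F = n) ->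
       forall k, k \in msupp (D a) -> (fweight k.1 + fweight k.2)%N = n)).
Proof.
split; first by exists (lext (@coprod K) : {linear H K -> H2 K}); apply: Delta_spec.
move=> D D_spec; split; [|split; [|split]] => [a|a|a b|n a an].
- exact: DeltaSpec_coassoc.
- exact: DeltaSpec_counit.
- exact: DeltaSpec_infinitesimal.
- exact: DeltaSpec_homog.
Qed.
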